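(* Let $0<q<1$, $N$ a positive integer, $n\in\{0,1,\dots,N\}$, and $\gamma\in\mathbb{C}$ with $\gamma q,\gamma q^2\notin\{q^{-j}:j\in\mathbb{Z}_{\ge0}\}$. Then $${}_4\phi_3\!\left(\begin{matrix}q^{-2n},q^{-2(N-n)-1},q^{-x},-\gamma q^{x+1}\\ q^{-N},-q^{-N},\gamma q\end{matrix};q,q\right)={}_4\phi_3\!\left(\begin{matrix}q^{-2n},q^{2n-2N-1},q^{-2x},\gamma^2q^{2x+2}\\ q^{-2N},\gamma q,\gamma q^2\end{matrix};q^2,q^2\right)$$ holds for all $x\in\mathbb{C}$ if $2n\le N$, and holds for $x\in\{0,1,\dots,N\}$ if $2n>N$.
   Context: $(x;q)_k=\prod_{j=0}^{k-1}(1-xq^j)$. A terminating ${}_4\phi_3\!\left(\begin{matrix}a_1,\dots,a_4\\ b_1,b_2,b_3\end{matrix};p,p\right)$ (base $p$, here $p=q$ or $p=q^2$) means $\sum_{k=0}^K\frac{(a_1,\dots,a_4;p)_k}{(b_1,b_2,b_3,p;p)_k}p^k$, where $K$ is the smallest nonnegative integer such that some numerator parameter $a_i$ equals $p^{-K}$ (the sum is truncated at the first numerator parameter that causes termination). *)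

From Stdlib Require Import Reals ClassicalEpsilon.
Open Scope R_scope.

Definition Cplx : Type := (R * R)%type.
Definition RtoC (r : R) : Cplx := (r, 0).
Definition Cadd (z w : Cplx) : Cplx := (fst z + fst w, snd z + snd w).
Definition Copp (z : Cplx) : Cplx := (- fst z, - snd z).
Definition Csub (z w : Cplx) : Cplx := Cadd z (Copp w).
Definition Cmul (z w : Cplx) : Cplx :=
  (fst z * fst w - snd z * snd w, fst z * snd w + snd z * fst w).
Definition Cinv (z : Cplx) : Cplx :=
  (fst z / (fst z ^ 2 + snd z ^ 2), - snd z / (fst z ^ 2 + snd z ^ 2)).
Definition Cdiv (z w : Cplx) : Cplx := Cmul z (Cinv w).
Definition C0 : Cplx := RtoC 0.
Definition C1 : Cplx := RtoC 1.

Definition Cexp (z : Cplx) : Cplx := (exp (fst z) * cos (snd z), exp (fst z) * sin (snd z)).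
Definition Cqpow (q : R) (z : Cplx) : Cplx := Cexp (Cmul z (RtoC (ln q))).

Fixpoint qpoch (x : Cplx) (p : R) (k : nat) : Cplx :=
  match k with
  | O => C1
  | S k' => Cmul (qpoch x p k') (Csub C1 (Cmul x (RtoC (p ^ k'))))
  end.

Fixpoint Csum (f : nat -> Cplx) (K : nat) : Cplx :=
  match K with
  | O => f O
  | S K' => Cadd (Csum f K') (f K)
  end.

Definition terminates_at (a1 a2 a3 a4 : Cplx) (p : R) (k : nat) : Prop :=
  let t := RtoC (/ p ^ k) in a1 = t \/ a2 = t \/ a3 = t \/ a4 = t.

Definition term_index (a1 a2 a3 a4 : Cplx) (p : R) : nat :=
  epsilon (inhabits 0%nat)
    (fun K => terminates_at a1 a2 a3 a4 p K /\
              forall j, (j < K)%nat -> ~ terminates_at a1 a2 a3 a4 p j).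

Definition phi43 (a1 a2 a3 a4 b1 b2 b3 : Cplx) (p : R) : Cplx :=
  Csum (fun k =>
     Cmul
       (Cdiv (Cmul (Cmul (qpoch a1 p k) (qpoch a2 p k)) (Cmul (qpoch a3 p k) (qpoch a4 p k)))
             (Cmul (Cmul (qpoch b1 p k) (qpoch b2 p k)) (Cmul (qpoch b3 p k) (qpoch (RtoC p) p k))))
       (RtoC (p ^ k)))
    (term_index a1 a2 a3 a4 p).

Definition LHS9 (q : R) (N n : nat) (gamma x : Cplx) : Cplx :=
  phi43 (RtoC (/ q ^ (2 * n))) (RtoC (/ q ^ (2 * (N - n) + 1)))
        (Cqpow q (Copp x)) (Copp (Cmul gamma (Cqpow q (Cadd x C1))))
        (RtoC (/ q ^ N)) (RtoC (- / q ^ N)) (Cmul gamma (RtoC q)) q.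

Definition RHS9 (q : R) (N n : nat) (gamma x : Cplx) : Cplx :=
  phi43 (RtoC (/ q ^ (2 * n))) (RtoC (/ q ^ (2 * N + 1 - 2 * n)))
        (Cqpow q (Cmul (RtoC (-2)) x))
        (Cmul (Cmul gamma gamma) (Cqpow q (Cadd (Cmul (RtoC 2) x) (RtoC 2))))
        (RtoC (/ q ^ (2 * N))) (Cmul gamma (RtoC q)) (Cmul gamma (RtoC (q ^ 2))) (q ^ 2).

(* Put c = q^-x and d = -gamma q^(x+1), so that c d = -gamma q.  On the right,
   (c^2;q^2)_j (d^2;q^2)_j contains (-c;q)_j (-d;q)_j = (lam c q^j;q)_j (lam d q^j;q)_j with lam = -q^-j; a q-analogue of a
   connection formula expands this in the basis (c q^j;q)_m (d q^j;q)_m, which turns the right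
   side into a double sum of kernel(k,j) (c;q)_k (d;q)_k / (-cd;q)_k.  Exchanging the sums,
   sum_j kernel(k,j) satisfies the same first-order recurrence in k as the k-th coefficient of
   the left side (a Wilf-Zeilberger certificate makes the residual telescope in j), so the two
   agree.  The left side runs up to k = 2n, but its denominator
   (q^-N;q)_k (-q^-N;q)_k = (q^-2N;q^2)_k vanishes for k > N; when 2n > N these terms
   disappear only because (q^-x;q)_k = 0 for x in {0..N}. *)

From Stdlib Require Import Reals Lra Lia Arith Field Classical ClassicalEpsilon.
Open Scope R_scope.

Fixpoint qpochR (x p : R) (k : nat) : R :=
  match k with O => 1 | S k' => qpochR x p k' * (1 - x * p ^ k') end.

Fixpoint sumR (f : nat -> R) (n : nat) : R :=
  match n with O => 0 | S n' => sumR f n' + f n' end.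

Lemma sumR_ext f g n : (forall i, (i < n)%nat -> f i = g i) -> sumR f n = sumR g n.
Proof.
  induction n; simpl; intros H; [reflexivity|].
  rewrite IHn by (intros; apply H; lia). rewrite H by lia. reflexivity.
Qed.

Lemma sumR_lin a b f g n :
  sumR (fun i => a * f i - b * g i) n = a * sumR f n - b * sumR g n.
Proof. induction n; simpl; [ring|]. rewrite IHn. ring. Qed.

Lemma sumR_telescope G n : sumR (fun i => G (S i) - G i) n = G n - G O.
Proof. induction n; simpl; [ring|]. rewrite IHn. ring. Qed.

Lemma sumR_zero_tail f n m :
  (forall i, (n <= i)%nat -> f i = 0) -> sumR f (n + m) = sumR f n.
Proof.
  intros H; induction m; simpl; [now rewrite Nat.add_0_r|].
  rewrite Nat.add_succ_r; simpl. rewrite IHm, H by lia. ring.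
Qed.

Lemma sumR_eq_of_tails f a b :
  (forall j, (a <= j)%nat -> f j = 0) -> (forall j, (b <= j)%nat -> f j = 0) ->
  sumR f a = sumR f b.
Proof.
  intros Ha Hb. destruct (le_lt_dec a b).
  - replace b with (a + (b - a))%nat by lia. symmetry; apply sumR_zero_tail; auto.
  - replace a with (b + (a - b))%nat by lia. apply sumR_zero_tail; auto.
Qed.

Lemma pow_lt_of_lt1 q a b : 0 < q < 1 -> (a < b)%nat -> q ^ b < q ^ a.
Proof.
  intros Hq Hab. replace b with (a + (b - a))%nat by lia. rewrite pow_add.
  assert (0 < q ^ a) by (apply pow_lt; lra).
  assert (0 <= q ^ (b - a) < 1) by (apply pow_lt_1_compat; lia || lra).
  nra.
Qed.

Lemma pow_inj_lt1 q a b : 0 < q < 1 -> q ^ a = q ^ b -> a = b.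
Proof.
  intros Hq H. destruct (Nat.lt_trichotomy a b) as [h|[h|h]]; auto;
    apply (pow_lt_of_lt1 q) in h; auto; lra.
Qed.

Lemma one_sub_pow_neq0 q i : 0 < q < 1 -> (0 < i)%nat -> 1 - q ^ i <> 0.
Proof.
  intros Hq Hi H. assert (E : q ^ i = q ^ 0) by (simpl; lra).
  apply pow_inj_lt1 in E; auto; lia.
Qed.

Lemma one_sub_pow_S_neq0 q k : 0 < q < 1 -> 1 - q * q ^ k <> 0.
Proof. intros Hq. apply (one_sub_pow_neq0 q (S k)); auto; lia. Qed.

Lemma one_sub_qq_sq_neq0 q j : 0 < q < 1 -> 1 - q * q * (q ^ j * q ^ j) <> 0.
Proof.
  intros Hq. replace (q * q * (q ^ j * q ^ j)) with (q * q ^ S (j + j))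
    by (rewrite <- tech_pow_Rmult, pow_add; ring).
  apply one_sub_pow_S_neq0; auto.
Qed.

Lemma pow_div x y m : y <> 0 -> (x / y) ^ m = x ^ m / y ^ m.
Proof.
  intros Hy; induction m; simpl; [field|].
  rewrite IHm. field. split; auto. apply pow_nonzero; auto.
Qed.

Lemma pow2_pow q j : (q ^ 2) ^ j = q ^ j * q ^ j.
Proof. rewrite <- pow_mult, <- pow_add. f_equal. lia. Qed.

Lemma qpochR_S x p k : qpochR x p (S k) = qpochR x p k * (1 - x * p ^ k).
Proof. reflexivity. Qed.

Lemma qpochR_neq0 x p k : (forall i, (i < k)%nat -> x * p ^ i <> 1) -> qpochR x p k <> 0.
Proof.
  induction k; simpl; intros H; [lra|].
  apply Rmult_integral_contrapositive; split.
  - apply IHk; intros; apply H; lia.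
  - intro E. apply (H k); lia || lra.
Qed.

Lemma qpochR_zero x p k i : (i < k)%nat -> x * p ^ i = 1 -> qpochR x p k = 0.
Proof.
  induction k; intros Hi Hx; [lia|]. simpl. destruct (Nat.eq_dec i k).
  - subst. rewrite Hx. ring.
  - rewrite IHk by (auto; lia). ring.
Qed.

Lemma qpochR_q_neq0 q k : 0 < q < 1 -> qpochR q q k <> 0.
Proof.
  intros Hq. apply qpochR_neq0; intros i _.
  rewrite tech_pow_Rmult. intro E. apply (one_sub_pow_neq0 q (S i)); auto; lia || lra.
Qed.

Lemma qpochR_q2_neq0 q k : 0 < q < 1 -> qpochR (q ^ 2) (q ^ 2) k <> 0.
Proof.
  intros Hq. apply qpochR_q_neq0.
  assert (0 < q ^ 2) by (apply pow_lt; lra). assert (q ^ 2 < 1) by nra. lra.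
Qed.

Lemma qpochR_shift x q L :
  q <> 0 -> qpochR (x / q) q (S L) = (1 - x / q) * qpochR x q L.
Proof.
  intros Hq. induction L; [simpl; ring|].
  rewrite qpochR_S, IHL. simpl. field. auto.
Qed.

Lemma qpochR_pm x q k : qpochR x q k * qpochR (- x) q k = qpochR (x * x) (q ^ 2) k.
Proof. induction k; [simpl; ring|]. rewrite !qpochR_S, <- IHk, pow2_pow. ring. Qed.

(** * The Wilf-Zeilberger certificate *)

Definition qbinom q j m := qpochR q q j / (qpochR q q m * qpochR q q (j - m)).

Definition lamq q j := - / q ^ j.

Section Certificate.

Variables (q : R) (n : nat) (B D : R).
Hypothesis Hq : 0 < q < 1.
Hypothesis HB : B = D * q ^ (2 * n) / q.

Definition rhs_coef j :=
  qpochR (/ q ^ (2 * n)) (q ^ 2) j * qpochR B (q ^ 2) j * (q ^ 2) ^ j /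
  (qpochR D (q ^ 2) j * qpochR (q ^ 2) (q ^ 2) j).

(* The coefficient of hterm k in the j-th summand of the right side, once
   (-c;q)_j (-d;q)_j is expanded with qpoch2_scaled_expand at lam = lamq q j. *)
Definition kernel k j :=
  if andb (j <=? k)%nat (k <=? 2 * j)%nat then
    rhs_coef j * qbinom q j (k - j) * lamq q j ^ (k - j) * qpochR (lamq q j) q (2 * j - k)
  else 0.

Definition lhs_coef k :=
  qpochR (/ q ^ (2 * n)) q k * qpochR B q k * q ^ k / (qpochR D (q ^ 2) k * qpochR q q k).

Definition rec_a k := (1 - D * (q ^ 2) ^ k) * (1 - q ^ S k).
Definition rec_b k := q * (1 - q ^ k / q ^ (2 * n)) * (1 - B * q ^ k).

(* If L k := sum_j kernel k j, then rec_a k * L (S k) = rec_b k * L k, which is the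
   recurrence satisfied by lhs_coef; cert is the telescoping certificate for it. *)
Definition cert k j :=
  - q ^ (2 * k + 2 - 2 * j) * (1 - D * (q ^ 2) ^ j / q ^ 2) * (1 - q ^ (2 * j - k - 1))
  * kernel (S k) j.

Lemma kernel_in k j : (j <= k <= 2 * j)%nat ->
  kernel k j = rhs_coef j * qbinom q j (k - j) * lamq q j ^ (k - j)
               * qpochR (lamq q j) q (2 * j - k).
Proof.
  intros H. unfold kernel. replace (andb _ _) with true; [reflexivity|].
  symmetry. apply andb_true_intro; split; apply Nat.leb_le; lia.
Qed.

Lemma kernel_out k j : ~ (j <= k <= 2 * j)%nat -> kernel k j = 0.
Proof.
  intros H. unfold kernel.
  destruct (j <=? k)%nat eqn:E1; destruct (k <=? 2 * j)%nat eqn:E2; simpl; auto.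
  apply Nat.leb_le in E1, E2. lia.
Qed.

Lemma lamq_S j : lamq q (S j) = lamq q j / q.
Proof.
  unfold lamq. simpl. field. split; [apply pow_nonzero|]; lra.
Qed.

Lemma kernel_split j m s : j = (m + s)%nat ->
  kernel (j + m) j = rhs_coef j * (qpochR q q j / (qpochR q q m * qpochR q q s))
                     * lamq q j ^ m * qpochR (lamq q j) q s.
Proof.
  intros ->. rewrite kernel_in by lia. unfold qbinom.
  replace (m + s + m - (m + s))%nat with m by lia.
  replace (m + s - m)%nat with s by lia.
  replace (2 * (m + s) - (m + s + m))%nat with s by lia.
  reflexivity.
Qed.

Lemma cert_interior m r :
  (forall i, (i <= S (m + r) + m)%nat -> D * (q ^ 2) ^ i <> 1) ->
  let j := S (m + r) in let k := (j + m)%nat in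
  rec_a k * kernel (S k) j - rec_b k * kernel k j = cert k (S j) - cert k j.
Proof.
  intros HD j k. unfold cert, k.
  replace (S (j + m)) with (j + S m)%nat by lia.
  replace (kernel (j + S m) (S j)) with (kernel (S j + m) (S j)) by (f_equal; lia).
  rewrite (kernel_split (S j) m (S (S r))), (kernel_split j (S m) r), (kernel_split j m (S r))
    by (unfold j; lia).
  replace (2 * (j + m) + 2 - 2 * S j)%nat with (m + m)%nat by lia.
  replace (2 * (j + m) + 2 - 2 * j)%nat with (S (S (m + m)))%nat by lia.
  replace (2 * S j - (j + m) - 1)%nat with (S (S r)) by (unfold j; lia).
  replace (2 * j - (j + m) - 1)%nat with r by (unfold j; lia).
  rewrite lamq_S, qpochR_shift, pow_div by lra.
  unfold rhs_coef, rec_a, rec_b. rewrite !qpochR_S.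
  assert (Hj : q ^ j = q * q ^ m * q ^ r)
    by (unfold j; rewrite <- tech_pow_Rmult, pow_add; ring).
  assert (Dj : 1 - D * (q ^ j * q ^ j) <> 0)
    by (rewrite <- pow2_pow; intro E; apply (HD j); lia || lra).
  pose proof (one_sub_qq_sq_neq0 q j Hq) as Qj.
  assert (qpochR D (q ^ 2) j <> 0) by (apply qpochR_neq0; intros i Hi; apply HD; unfold j; lia).
  clearbody j. rewrite Hj in Dj, Qj.
  rewrite !pow2_pow. set (q2 := q ^ 2).
  rewrite <- !tech_pow_Rmult, !pow_add, Hj, HB. unfold lamq. rewrite Hj.
  set (Q := q ^ (2 * n)).
  set (A1 := qpochR (/ Q) q2 j). set (A2 := qpochR (D * Q / q) q2 j).
  set (A3 := qpochR D q2 j). set (A4 := qpochR q2 q2 j).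
  assert (q <> 0) by lra.
  assert (q ^ m <> 0) by (apply pow_nonzero; lra).
  assert (q ^ r <> 0) by (apply pow_nonzero; lra).
  assert (Q <> 0) by (apply pow_nonzero; lra).
  pose proof (qpochR_q_neq0 q m Hq). pose proof (qpochR_q_neq0 q r Hq).
  pose proof (qpochR_q2_neq0 q j Hq).
  pose proof (one_sub_pow_S_neq0 q m Hq). pose proof (one_sub_pow_S_neq0 q r Hq).
  pose proof (one_sub_pow_S_neq0 q (S r) Hq). unfold q2; simpl pow in *.
  field; repeat split; auto.
Qed.

Lemma cert_diagonal j :
  (forall i, (i <= j + j)%nat -> D * (q ^ 2) ^ i <> 1) ->
  let k := (j + j)%nat in
  rec_a k * kernel (S k) j - rec_b k * kernel k j = cert k (S j) - cert k j.
Proof.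
  intros HD k. unfold cert, k.
  rewrite (kernel_out (S (j + j)) j) by lia.
  replace (S (j + j)) with (S j + j)%nat by lia.
  rewrite (kernel_split (S j) j 1), (kernel_split j j 0) by lia.
  replace (2 * (j + j) + 2 - 2 * S j)%nat with (j + j)%nat by lia.
  replace (2 * S j - (j + j) - 1)%nat with 1%nat by lia.
  rewrite lamq_S, pow_div by lra.
  unfold rhs_coef, rec_a, rec_b. rewrite !qpochR_S.
  assert (Dj : 1 - D * (q ^ j * q ^ j) <> 0)
    by (rewrite <- pow2_pow; intro E; apply (HD j); lia || lra).
  pose proof (one_sub_qq_sq_neq0 q j Hq) as Qj.
  assert (qpochR D (q ^ 2) j <> 0) by (apply qpochR_neq0; intros i Hi; apply HD; lia).
  rewrite !pow2_pow. set (q2 := q ^ 2).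
  rewrite <- !tech_pow_Rmult, !pow_add, HB. unfold lamq.
  set (Q := q ^ (2 * n)).
  set (A1 := qpochR (/ Q) q2 j). set (A2 := qpochR (D * Q / q) q2 j).
  set (A3 := qpochR D q2 j). set (A4 := qpochR q2 q2 j).
  assert (q <> 0) by lra.
  assert (q ^ j <> 0) by (apply pow_nonzero; lra).
  assert (Q <> 0) by (apply pow_nonzero; lra).
  pose proof (qpochR_q_neq0 q j Hq). pose proof (qpochR_q2_neq0 q j Hq).
  pose proof (one_sub_pow_S_neq0 q j Hq). assert (1 - q <> 0) by lra.
  unfold q2; simpl pow in *. simpl qpochR.
  field; repeat split; auto.
Qed.

Lemma cert_telescopes k j :
  (forall i, (i <= k)%nat -> D * (q ^ 2) ^ i <> 1) ->
  rec_a k * kernel (S k) j - rec_b k * kernel k j = cert k (S j) - cert k j.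
Proof.
  intros HD. destruct (le_lt_dec j k) as [Hjk|Hjk].
  - destruct (lt_eq_lt_dec k (2 * j)) as [[H|H]|H].
    + destruct (Nat.le_exists_sub j k Hjk) as [m [-> _]].
      destruct (Nat.le_exists_sub (S m) j ltac:(lia)) as [r [-> _]].
      replace (m + (r + S m))%nat with (S (m + r) + m)%nat in * by lia.
      replace (r + S m)%nat with (S (m + r)) by lia.
      apply cert_interior; auto.
    + replace k with (j + j)%nat in * by lia. apply cert_diagonal; auto.
    + unfold cert. rewrite (kernel_out (S k) j), (kernel_out k j) by lia.
      destruct (Nat.eq_dec k (S (2 * j))) as [E|E].
      * replace (2 * S j - k - 1)%nat with 0%nat by lia. simpl pow. ring.
      * rewrite (kernel_out (S k) (S j)) by lia. ring.
  - unfold cert. rewrite (kernel_out k j), (kernel_out (S k) (S j)) by lia.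
    destruct (Nat.eq_dec j (S k)) as [->|E].
    + replace (2 * k + 2 - 2 * S k)%nat with 0%nat by lia.
      replace (2 * S k - k - 1)%nat with (S k) by lia.
      unfold rec_a. rewrite !pow2_pow. simpl pow. field. lra.
    + rewrite (kernel_out (S k) j) by lia. ring.
Qed.

Lemma sum_kernel k :
  (forall i, (i < k)%nat -> D * (q ^ 2) ^ i <> 1) -> sumR (kernel k) (S k) = lhs_coef k.
Proof.
  induction k as [|k IH]; intros HD.
  - simpl. rewrite kernel_in by lia. unfold rhs_coef, qbinom, lhs_coef. simpl. field.
  - assert (Hs := sumR_telescope (cert k) (S (S k))).
    rewrite <- (sumR_ext (fun j => rec_a k * kernel (S k) j - rec_b k * kernel k j)) in Hs
      by (intros; apply cert_telescopes; intros; apply HD; lia).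
    rewrite sumR_lin in Hs. unfold cert at 1 2 in Hs.
    rewrite (kernel_out (S k) (S (S k))), (kernel_out (S k) 0) in Hs by lia.
    change (sumR (kernel k) (S (S k))) with (sumR (kernel k) (S k) + kernel k (S k)) in Hs.
    rewrite (kernel_out k (S k)), IH in Hs by (intros; try apply HD; lia).
    assert (Da : 1 - D * (q ^ 2) ^ k <> 0) by (intro E; apply (HD k); lia || lra).
    assert (Ha : rec_a k <> 0)
      by (apply Rmult_integral_contrapositive; split; [|apply one_sub_pow_S_neq0]; auto).
    apply (Rmult_eq_reg_l (rec_a k)); auto.
    replace (rec_a k * sumR (kernel (S k)) (S (S k))) with (rec_b k * lhs_coef k) by lra.
    unfold lhs_coef, rec_a, rec_b. rewrite !qpochR_S.
    assert (q <> 0) by lra.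
    assert (qpochR D (q ^ 2) k <> 0) by (apply qpochR_neq0; intros i Hi; apply HD; lia).
    assert (q ^ (2 * n) <> 0) by (apply pow_nonzero; lra).
    pose proof (qpochR_q_neq0 q k Hq). pose proof (one_sub_pow_S_neq0 q k Hq).
    simpl pow. field. repeat split; auto.
Qed.
End Certificate.

Lemma Cpair_eq (a b c d : R) : a = c -> b = d -> (a, b) = (c, d).
Proof. intros; subst; reflexivity. Qed.

Lemma Cring_theory : ring_theory C0 C1 Cadd Cmul Csub Copp (@eq Cplx).
Proof.
  constructor; intros; repeat match goal with z : Cplx |- _ => destruct z end;
    cbv [Cadd Cmul Csub Copp C0 C1 RtoC fst snd]; apply Cpair_eq; ring.
Qed.

Lemma Cinv_l (z : Cplx) : z <> C0 -> Cmul (Cinv z) z = C1.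
Proof.
  destruct z as [a b]. unfold Cinv, Cmul, C0, C1, RtoC; simpl. intros H.
  assert (a * a + b * b <> 0).
  { intro E. apply H. assert (a = 0) by nra. assert (b = 0) by nra. subst; reflexivity. }
  apply Cpair_eq; field; auto.
Qed.

Lemma Cfield_theory : field_theory C0 C1 Cadd Cmul Csub Copp Cdiv Cinv (@eq Cplx).
Proof.
  constructor.
  - exact Cring_theory.
  - unfold C1, C0, RtoC. intro E. injection E. lra.
  - reflexivity.
  - exact Cinv_l.
Qed.

Add Field Cfield : Cfield_theory.

Lemma RtoC_add a b : RtoC (a + b) = Cadd (RtoC a) (RtoC b).
Proof. unfold RtoC, Cadd; simpl; apply Cpair_eq; ring. Qed.

Lemma RtoC_mul a b : RtoC (a * b) = Cmul (RtoC a) (RtoC b).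
Proof. unfold RtoC, Cmul; simpl; apply Cpair_eq; ring. Qed.

Lemma RtoC_sub a b : RtoC (a - b) = Csub (RtoC a) (RtoC b).
Proof. unfold RtoC, Csub, Cadd, Copp; simpl; apply Cpair_eq; ring. Qed.

Lemma RtoC_opp a : RtoC (- a) = Copp (RtoC a).
Proof. unfold RtoC, Copp; simpl; apply Cpair_eq; ring. Qed.

(* Both sides are [0] at [a = 0]. *)
Lemma RtoC_inv a : RtoC (/ a) = Cinv (RtoC a).
Proof.
  unfold RtoC, Cinv; simpl. destruct (Req_dec a 0) as [->|H].
  - rewrite Rinv_0. apply Cpair_eq; unfold Rdiv; ring.
  - apply Cpair_eq; field; auto.
Qed.

Lemma RtoC_1 : RtoC 1 = C1.
Proof. reflexivity. Qed.

Lemma RtoC_neq0 a : a <> 0 -> RtoC a <> C0.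
Proof. intros H E. apply H. injection E; auto. Qed.

Ltac push_RtoC :=
  unfold Rdiv; repeat rewrite ?RtoC_mul, ?RtoC_add, ?RtoC_sub, ?RtoC_opp, ?RtoC_inv, ?RtoC_1.

Ltac RtoC_nonzero :=
  try change (R1, R0) with C1; try change (R0, R0) with C0;
  repeat rewrite <- ?RtoC_mul, <- ?RtoC_1, <- ?RtoC_sub, <- ?RtoC_add, <- ?RtoC_opp;
  apply RtoC_neq0; auto; try lra.

Lemma Cmul_neq0 a b : a <> C0 -> b <> C0 -> Cmul a b <> C0.
Proof.
  intros Ha Hb E. apply Hb.
  transitivity (Cmul (Cinv a) (Cmul a b)); [field; auto|]. rewrite E. field; auto.
Qed.

Fixpoint Csum_lt (f : nat -> Cplx) (n : nat) : Cplx :=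
  match n with O => C0 | S n' => Cadd (Csum_lt f n') (f n') end.

Lemma Csum_Csum_lt f K : Csum f K = Csum_lt f (S K).
Proof. induction K; simpl; [field|]. rewrite IHK. reflexivity. Qed.

Lemma Csum_lt_ext f g n :
  (forall i, (i < n)%nat -> f i = g i) -> Csum_lt f n = Csum_lt g n.
Proof.
  induction n; simpl; intros H; [reflexivity|].
  rewrite IHn by (intros; apply H; lia). rewrite H by lia. reflexivity.
Qed.

Lemma Csum_lt_add f g n :
  Csum_lt (fun i => Cadd (f i) (g i)) n = Cadd (Csum_lt f n) (Csum_lt g n).
Proof. induction n; simpl; [field|]. rewrite IHn. field. Qed.

Lemma Csum_lt_mulr f a n : Cmul (Csum_lt f n) a = Csum_lt (fun i => Cmul (f i) a) n.
Proof. induction n; simpl; [field|]. rewrite <- IHn. field. Qed.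

Lemma Csum_lt_mull a f n : Cmul a (Csum_lt f n) = Csum_lt (fun i => Cmul a (f i)) n.
Proof. induction n; simpl; [field|]. rewrite <- IHn. field. Qed.

Lemma Csum_lt_zero f n : (forall i, (i < n)%nat -> f i = C0) -> Csum_lt f n = C0.
Proof. induction n; simpl; intros H; [reflexivity|]. rewrite IHn, H by (auto; lia). field. Qed.

Lemma Csum_lt_zero_tail f n m :
  (forall i, (n <= i)%nat -> f i = C0) -> Csum_lt f (n + m) = Csum_lt f n.
Proof.
  intros H; induction m; simpl; [now rewrite Nat.add_0_r|].
  rewrite Nat.add_succ_r; simpl. rewrite IHm, H by lia. field.
Qed.

Lemma Csum_lt_split f a b :
  Csum_lt f (a + b) = Cadd (Csum_lt f a) (Csum_lt (fun i => f (a + i)%nat) b).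
Proof.
  induction b; simpl; [rewrite Nat.add_0_r; field|].
  rewrite Nat.add_succ_r. simpl. rewrite IHb. field.
Qed.

Lemma Csum_lt_Sl f m : Csum_lt f (S m) = Cadd (f 0%nat) (Csum_lt (fun k => f (S k)) m).
Proof.
  replace (S m) with (1 + m)%nat by lia. rewrite Csum_lt_split. simpl. field.
Qed.

Lemma Csum_lt_swap (f : nat -> nat -> Cplx) n m :
  Csum_lt (fun i => Csum_lt (f i) m) n = Csum_lt (fun j => Csum_lt (fun i => f i j) n) m.
Proof.
  induction n; simpl.
  - symmetry. apply Csum_lt_zero. reflexivity.
  - rewrite IHn, <- Csum_lt_add. reflexivity.
Qed.

Lemma Csum_lt_RtoC f n : Csum_lt (fun i => RtoC (f i)) n = RtoC (sumR f n).
Proof. induction n; simpl; [reflexivity|]. rewrite IHn, RtoC_add. reflexivity. Qed.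

Lemma qpoch_RtoC x p k : qpoch (RtoC x) p k = RtoC (qpochR x p k).
Proof.
  induction k; simpl; [reflexivity|].
  rewrite IHk, RtoC_mul, RtoC_sub, RtoC_mul. reflexivity.
Qed.

Lemma qpoch_S z p k : qpoch z p (S k) = Cmul (qpoch z p k) (Csub C1 (Cmul z (RtoC (p ^ k)))).
Proof. reflexivity. Qed.

Lemma qpoch_shift z p L :
  qpoch z p (S L) = Cmul (Csub C1 z) (qpoch (Cmul z (RtoC p)) p L).
Proof.
  induction L.
  - rewrite qpoch_S. simpl. rewrite RtoC_1. field.
  - rewrite qpoch_S, IHL, qpoch_S. simpl pow. rewrite RtoC_mul. field.
Qed.

Lemma qpoch_add z p a b :
  qpoch z p (a + b) = Cmul (qpoch z p a) (qpoch (Cmul z (RtoC (p ^ a))) p b).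
Proof.
  induction b; [rewrite Nat.add_0_r; simpl; field|].
  rewrite Nat.add_succ_r, !qpoch_S, IHb, pow_add, RtoC_mul. field.
Qed.

Lemma qpoch_sq z q j : qpoch (Cmul z z) (q ^ 2) j = Cmul (qpoch z q j) (qpoch (Copp z) q j).
Proof. induction j; [simpl; field|]. rewrite !qpoch_S, IHj, pow2_pow, RtoC_mul. field. Qed.

Lemma qpoch_pair w q j :
  Cmul (qpoch w (q ^ 2) j) (qpoch (Cmul w (RtoC q)) (q ^ 2) j) = qpoch w q (2 * j).
Proof.
  induction j; [simpl; field|].
  replace (2 * S j)%nat with (S (S (2 * j))) by lia. rewrite !qpoch_S, <- IHj, pow2_pow.
  replace (q ^ S (2 * j)) with (q * (q ^ j * q ^ j))
    by (simpl; rewrite <- pow_add; do 2 f_equal; lia).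
  replace (q ^ (2 * j)) with (q ^ j * q ^ j) by (rewrite <- pow_add; f_equal; lia).
  rewrite !RtoC_mul. field.
Qed.

Lemma qpoch_neq0 z p k :
  (forall i, (i < k)%nat -> Csub C1 (Cmul z (RtoC (p ^ i))) <> C0) -> qpoch z p k <> C0.
Proof.
  induction k; intros H.
  - simpl. unfold C1, C0, RtoC. intro E; injection E; lra.
  - rewrite qpoch_S. apply Cmul_neq0; [apply IHk; intros|]; apply H; lia.
Qed.

Lemma qpoch_zero z p k i : p <> 0 -> (i < k)%nat -> z = RtoC (/ p ^ i) -> qpoch z p k = C0.
Proof.
  intros Hp; induction k; intros Hi Hz; [lia|]. rewrite qpoch_S. destruct (Nat.eq_dec i k).
  - subst. rewrite <- RtoC_mul, Rinv_l, RtoC_1 by (apply pow_nonzero; auto). field.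
  - rewrite IHk by (auto; lia). field.
Qed.

(** * A connection formula *)

Definition qpoch2 (c d : Cplx) q k := Cmul (qpoch c q k) (qpoch d q k).

Definition conn_coef q (lam : R) (s : Cplx) n k : Cplx :=
  if (k <=? n)%nat then
    Cmul (RtoC (qbinom q n k * lam ^ k * qpochR lam q (n - k)))
         (qpoch (Cmul (Cmul (RtoC lam) s) (RtoC (q ^ k))) q (n - k))
  else C0.

Definition conn_diag q (lam : R) (s : Cplx) n k : Cplx :=
  Csub (Cadd C1 (Cmul (Cmul (RtoC (lam * lam)) s) (RtoC (q ^ n * q ^ n))))
       (Cmul (RtoC (lam * q ^ n / q ^ k)) (Cadd C1 (Cmul s (RtoC (q ^ k * q ^ k))))).

Definition conn_step q (lam : R) (s : Cplx) n k : Cplx :=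
  match k with
  | O => C0
  | S k' => Cmul (conn_coef q lam s n k') (RtoC (lam * q ^ n / q ^ k'))
  end.

Lemma qpoch2_mul_factors q lam c d n k : q <> 0 ->
  Cmul (qpoch2 c d q k) (Cmul (Csub C1 (Cmul (Cmul (RtoC lam) c) (RtoC (q ^ n))))
                              (Csub C1 (Cmul (Cmul (RtoC lam) d) (RtoC (q ^ n)))))
  = Cadd (Cmul (conn_diag q lam (Cmul c d) n k) (qpoch2 c d q k))
         (Cmul (RtoC (lam * q ^ n / q ^ k)) (qpoch2 c d q (S k))).
Proof.
  intros Hq. unfold qpoch2, conn_diag. rewrite !qpoch_S. push_RtoC.
  assert (RtoC (q ^ k) <> C0) by (apply RtoC_neq0, pow_nonzero; auto).
  field; auto.
Qed.

Section Connection.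

Variables (q lam : R) (s : Cplx).
Hypothesis Hq : 0 < q < 1.

Lemma conn_coef_split n k r : n = (k + r)%nat ->
  conn_coef q lam s n k =
  Cmul (RtoC (qpochR q q n / (qpochR q q k * qpochR q q r) * lam ^ k * qpochR lam q r))
       (qpoch (Cmul (Cmul (RtoC lam) s) (RtoC (q ^ k))) q r).
Proof.
  intros ->. unfold conn_coef, qbinom.
  replace (k <=? k + r)%nat with true by (symmetry; apply Nat.leb_le; lia).
  replace (k + r - k)%nat with r by lia. reflexivity.
Qed.

Lemma conn_coef_out n k : (n < k)%nat -> conn_coef q lam s n k = C0.
Proof.
  intros H. unfold conn_coef.
  replace (k <=? n)%nat with false by (symmetry; apply Nat.leb_gt; lia). reflexivity.
Qed.

Lemma conn_coef_S_mid k r :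
  let n := (S k + r)%nat in
  conn_coef q lam s (S n) (S k) =
  Cadd (Cmul (conn_coef q lam s n (S k)) (conn_diag q lam s n (S k)))
       (Cmul (conn_coef q lam s n k) (RtoC (lam * q ^ n / q ^ k))).
Proof.
  intros n. unfold n.
  rewrite (conn_coef_split _ (S k) (S r)), (conn_coef_split _ (S k) r),
    (conn_coef_split _ k (S r)) by lia.
  rewrite (qpoch_shift (Cmul (Cmul (RtoC lam) s) (RtoC (q ^ k)))), qpoch_S.
  replace (Cmul (Cmul (Cmul (RtoC lam) s) (RtoC (q ^ k))) (RtoC q)) with
    (Cmul (Cmul (RtoC lam) s) (RtoC (q ^ S k))) by (simpl pow; rewrite RtoC_mul; field).
  unfold conn_diag. rewrite !qpochR_S.
  set (P := qpoch (Cmul (Cmul (RtoC lam) s) (RtoC (q ^ S k))) q r).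
  replace (S k + r)%nat with (S (k + r)) by lia.
  rewrite !qpochR_S. simpl pow. rewrite pow_add.
  assert (q <> 0) by lra.
  assert (q ^ k <> 0) by (apply pow_nonzero; lra).
  assert (q ^ r <> 0) by (apply pow_nonzero; lra).
  pose proof (qpochR_q_neq0 q (k + r) Hq). pose proof (qpochR_q_neq0 q k Hq).
  pose proof (qpochR_q_neq0 q r Hq).
  pose proof (one_sub_pow_S_neq0 q k Hq). pose proof (one_sub_pow_S_neq0 q r Hq).
  push_RtoC.
  repeat match goal with H : ?x <> 0 |- _ =>
    lazymatch goal with
    | _ : RtoC x <> C0 |- _ => fail
    | _ => assert (RtoC x <> C0) by (apply RtoC_neq0; exact H)
    end
  end.
  field. repeat split; auto; RtoC_nonzero.
Qed.
Lemma conn_coef_S_0 n :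
  conn_coef q lam s (S n) 0 = Cmul (conn_coef q lam s n 0) (conn_diag q lam s n 0).
Proof.
  rewrite (conn_coef_split _ 0 (S n)), (conn_coef_split _ 0 n), qpoch_S by reflexivity.
  unfold conn_diag. rewrite (qpochR_S lam q n).
  pose proof (qpochR_q_neq0 q n Hq). pose proof (qpochR_q_neq0 q (S n) Hq).
  simpl pow. simpl (qpochR q q 0). push_RtoC.
  field. repeat split; RtoC_nonzero.
Qed.

Lemma conn_coef_S_top n :
  conn_coef q lam s (S n) (S n) =
  Cmul (conn_coef q lam s n n) (RtoC (lam * q ^ n / q ^ n)).
Proof.
  rewrite (conn_coef_split _ (S n) 0), (conn_coef_split _ n 0) by lia.
  simpl (qpochR _ q 0). simpl (qpoch _ q 0). simpl (lam ^ S n).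
  pose proof (qpochR_q_neq0 q n Hq). pose proof (qpochR_q_neq0 q (S n) Hq).
  assert (q ^ n <> 0) by (apply pow_nonzero; lra).
  replace (lam * q ^ n / q ^ n) with lam by (field; auto).
  push_RtoC. field. repeat split; RtoC_nonzero.
Qed.

Lemma conn_coef_S n k : (k <= S n)%nat ->
  conn_coef q lam s (S n) k =
  Cadd (Cmul (conn_coef q lam s n k) (conn_diag q lam s n k)) (conn_step q lam s n k).
Proof.
  intros Hk. destruct k as [|k]; simpl conn_step.
  - rewrite conn_coef_S_0. field.
  - destruct (Nat.eq_dec k n) as [->|Hne].
    + rewrite conn_coef_S_top, (conn_coef_out n (S n)) by lia. field.
    + replace n with (S k + (n - S k))%nat by lia. apply conn_coef_S_mid.
Qed.

End Connection.

Lemma qpoch2_scaled_expand q lam c d n : 0 < q < 1 ->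
  qpoch2 (Cmul (RtoC lam) c) (Cmul (RtoC lam) d) q n =
  Csum_lt (fun k => Cmul (conn_coef q lam (Cmul c d) n k) (qpoch2 c d q k)) (S n).
Proof.
  intros Hq. set (s := Cmul c d). induction n as [|n IH].
  - simpl. rewrite (conn_coef_split q lam _ 0 0 0) by reflexivity.
    unfold qpoch2. simpl. push_RtoC. field. RtoC_nonzero.
  - pose (A k := Cmul (Cmul (conn_coef q lam s n k) (conn_diag q lam s n k)) (qpoch2 c d q k)).
    pose (F k := Cmul (conn_step q lam s n k) (qpoch2 c d q k)).
    transitivity (Cadd (Csum_lt A (S n)) (Csum_lt (fun k => F (S k)) (S n))).
    + transitivity (Cmul (qpoch2 (Cmul (RtoC lam) c) (Cmul (RtoC lam) d) q n)
        (Cmul (Csub C1 (Cmul (Cmul (RtoC lam) c) (RtoC (q ^ n))))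
              (Csub C1 (Cmul (Cmul (RtoC lam) d) (RtoC (q ^ n)))))).
      { unfold qpoch2. rewrite !qpoch_S. field. }
      rewrite IH, Csum_lt_mulr, <- Csum_lt_add. apply Csum_lt_ext. intros k _.
      unfold A, F, conn_step.
      rewrite <- (Rmul_assoc Cring_theory), qpoch2_mul_factors by lra. fold s. field.
    + rewrite (Csum_lt_ext _ (fun k => Cadd (A k) (F k)) (S (S n)))
        by (intros k Hk; unfold A, F; rewrite conn_coef_S by (auto; lia); field).
      rewrite Csum_lt_add, (Csum_lt_Sl F).
      change (Csum_lt A (S (S n))) with (Cadd (Csum_lt A (S n)) (A (S n))).
      replace (A (S n)) with C0 by (unfold A; rewrite conn_coef_out by lia; field).
      replace (F 0%nat) with C0 by (unfold F; simpl; field).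
      field.
Qed.

(** * Both sides as sums against a common factor *)

Definition term43 (a1 a2 a3 a4 b1 b2 b3 : Cplx) (p : R) (k : nat) : Cplx :=
  Cmul
    (Cdiv (Cmul (Cmul (qpoch a1 p k) (qpoch a2 p k)) (Cmul (qpoch a3 p k) (qpoch a4 p k)))
          (Cmul (Cmul (qpoch b1 p k) (qpoch b2 p k)) (Cmul (qpoch b3 p k) (qpoch (RtoC p) p k))))
    (RtoC (p ^ k)).

Definition qpoch_nonvanishing (z : Cplx) (q : R) :=
  forall i, Csub C1 (Cmul z (RtoC (q ^ i))) <> C0.

Lemma qpoch_nonvanishing_intro z q : q <> 0 ->
  (forall j, z <> RtoC (/ q ^ j)) -> qpoch_nonvanishing z q.
Proof.
  intros Hq Hz i E. apply (Hz i). rewrite RtoC_inv.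
  assert (RtoC (q ^ i) <> C0) by (apply RtoC_neq0, pow_nonzero; auto).
  transitivity (Cmul (Cmul z (RtoC (q ^ i))) (Cinv (RtoC (q ^ i)))); [field; auto|].
  replace (Cmul z (RtoC (q ^ i))) with C1; [ring|].
  transitivity (Csub C1 (Csub C1 (Cmul z (RtoC (q ^ i))))); [rewrite E|]; field.
Qed.

Lemma qpoch_shifted_neq0 z q a b :
  qpoch_nonvanishing z q -> qpoch (Cmul z (RtoC (q ^ a))) q b <> C0.
Proof.
  intros Hz. apply qpoch_neq0. intros i _.
  replace (Cmul (Cmul z (RtoC (q ^ a))) (RtoC (q ^ i))) with (Cmul z (RtoC (q ^ (a + i))))
    by (rewrite pow_add, RtoC_mul; field).
  apply Hz.
Qed.

Lemma qpoch_nonvanishing_neq0 z q k : qpoch_nonvanishing z q -> qpoch z q k <> C0.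
Proof. intros Hz. apply qpoch_neq0. intros; apply Hz. Qed.

Definition hterm c d q k := Cdiv (qpoch2 c d q k) (qpoch (Copp (Cmul c d)) q k).

Lemma rhs_term_product q n B D c d j : 0 < q < 1 ->
  qpochR D (q ^ 2) j <> 0 -> qpoch_nonvanishing (Copp (Cmul c d)) q ->
  term43 (RtoC (/ q ^ (2 * n))) (RtoC B) (Cmul c c) (Cmul d d) (RtoC D) (Copp (Cmul c d))
         (Cmul (Copp (Cmul c d)) (RtoC q)) (q ^ 2) j
  = Cmul (RtoC (rhs_coef q n B D j))
         (Cdiv (Cmul (qpoch2 c d q j) (qpoch2 (Copp c) (Copp d) q j))
               (qpoch (Copp (Cmul c d)) q (2 * j))).
Proof.
  intros Hq HD Hs. unfold term43, rhs_coef, qpoch2.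
  rewrite !qpoch_RtoC, !qpoch_sq, <- (qpoch_pair (Copp (Cmul c d)) q j).
  assert (H2 := qpoch_nonvanishing_neq0 _ _ (2 * j) Hs).
  rewrite <- qpoch_pair in H2.
  assert (qpoch (Copp (Cmul c d)) (q ^ 2) j <> C0) by (intro E; apply H2; rewrite E; field).
  assert (qpoch (Cmul (Copp (Cmul c d)) (RtoC q)) (q ^ 2) j <> C0)
    by (intro E; apply H2; rewrite E; field).
  pose proof (qpochR_q2_neq0 q j Hq).
  push_RtoC. field. repeat split; auto; RtoC_nonzero.
Qed.

Lemma qpoch2_add c d q a b :
  Cmul (qpoch2 c d q a) (qpoch2 (Cmul c (RtoC (q ^ a))) (Cmul d (RtoC (q ^ a))) q b)
  = qpoch2 c d q (a + b).
Proof. unfold qpoch2. rewrite !qpoch_add. field. Qed.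

Lemma rhs_term_summand q n B D c d j m s : 0 < q < 1 -> j = (m + s)%nat ->
  qpochR D (q ^ 2) j <> 0 -> qpoch_nonvanishing (Copp (Cmul c d)) q ->
  Cdiv (Cmul (Cmul (RtoC (rhs_coef q n B D j)) (qpoch2 c d q j))
             (Cmul (conn_coef q (lamq q j) (Cmul (Cmul c (RtoC (q ^ j))) (Cmul d (RtoC (q ^ j)))) j m)
                   (qpoch2 (Cmul c (RtoC (q ^ j))) (Cmul d (RtoC (q ^ j))) q m)))
       (qpoch (Copp (Cmul c d)) q (2 * j))
  = Cmul (RtoC (kernel q n B D (j + m) j)) (hterm c d q (j + m)).
Proof.
  intros Hq Hj HD Hs.
  rewrite (conn_coef_split _ _ _ _ m s Hj), (kernel_split q n B D j m s Hj).
  replace (Cmul (Cmul (RtoC (lamq q j))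
                      (Cmul (Cmul c (RtoC (q ^ j))) (Cmul d (RtoC (q ^ j))))) (RtoC (q ^ m)))
    with (Cmul (Copp (Cmul c d)) (RtoC (q ^ (j + m)))).
  2:{ unfold lamq. rewrite pow_add, RtoC_opp, RtoC_inv, !RtoC_mul. field.
      apply RtoC_neq0, pow_nonzero; lra. }
  replace (2 * j)%nat with (j + m + s)%nat by lia.
  rewrite qpoch_add. unfold hterm. rewrite <- (qpoch2_add c d q j m).
  assert (qpoch (Copp (Cmul c d)) q (j + m) <> C0) by (apply qpoch_nonvanishing_neq0; auto).
  pose proof (qpoch_shifted_neq0 _ _ (j + m) s Hs).
  pose proof (qpochR_q_neq0 q m Hq). pose proof (qpochR_q_neq0 q s Hq).
  pose proof (qpochR_q_neq0 q j Hq). pose proof (qpochR_q2_neq0 q j Hq).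
  unfold rhs_coef. push_RtoC. field. repeat split; auto; RtoC_nonzero.
Qed.

Lemma rhs_term_expand q n B D c d j : 0 < q < 1 ->
  qpochR D (q ^ 2) j <> 0 -> qpoch_nonvanishing (Copp (Cmul c d)) q ->
  term43 (RtoC (/ q ^ (2 * n))) (RtoC B) (Cmul c c) (Cmul d d) (RtoC D) (Copp (Cmul c d))
         (Cmul (Copp (Cmul c d)) (RtoC q)) (q ^ 2) j
  = Csum_lt (fun m => Cmul (RtoC (kernel q n B D (j + m) j)) (hterm c d q (j + m))) (S j).
Proof.
  intros Hq HD Hs. rewrite rhs_term_product by auto.
  assert (Hflip : forall z, Copp z = Cmul (RtoC (lamq q j)) (Cmul z (RtoC (q ^ j)))).
  { intros z. unfold lamq. rewrite RtoC_opp, RtoC_inv. field. apply RtoC_neq0, pow_nonzero; lra. }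
  rewrite (Hflip c), (Hflip d), qpoch2_scaled_expand by auto.
  transitivity (Csum_lt (fun m => Cdiv (Cmul (Cmul (RtoC (rhs_coef q n B D j)) (qpoch2 c d q j))
     (Cmul (conn_coef q (lamq q j) (Cmul (Cmul c (RtoC (q ^ j))) (Cmul d (RtoC (q ^ j)))) j m)
           (qpoch2 (Cmul c (RtoC (q ^ j))) (Cmul d (RtoC (q ^ j))) q m)))
     (qpoch (Copp (Cmul c d)) q (2 * j))) (S j)).
  { unfold Cdiv. rewrite <- Csum_lt_mulr, <- Csum_lt_mull. ring. }
  apply Csum_lt_ext. intros m Hm.
  apply rhs_term_summand with (s := (j - m)%nat); auto; lia.
Qed.

Lemma lhs_term_factor q n N B c d k : 0 < q < 1 ->
  qpochR (/ q ^ (2 * N)) (q ^ 2) k <> 0 -> qpoch_nonvanishing (Copp (Cmul c d)) q ->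
  term43 (RtoC (/ q ^ (2 * n))) (RtoC B) c d (RtoC (/ q ^ N)) (RtoC (- / q ^ N))
         (Copp (Cmul c d)) q k
  = Cmul (RtoC (lhs_coef q n B (/ q ^ (2 * N)) k)) (hterm c d q k).
Proof.
  intros Hq HD Hs. unfold term43, lhs_coef, hterm, qpoch2. rewrite !qpoch_RtoC.
  assert (E : qpochR (/ q ^ N) q k * qpochR (- / q ^ N) q k = qpochR (/ q ^ (2 * N)) (q ^ 2) k).
  { rewrite qpochR_pm, <- Rinv_mult, <- pow_add. do 3 f_equal. lia. }
  rewrite <- E in *.
  pose proof (qpoch_nonvanishing_neq0 _ _ k Hs). pose proof (qpochR_q_neq0 q k Hq).
  assert (qpochR (/ q ^ N) q k <> 0) by (intro Z; apply HD; rewrite Z; ring).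
  assert (qpochR (- / q ^ N) q k <> 0) by (intro Z; apply HD; rewrite Z; ring).
  push_RtoC. field. repeat split; auto; RtoC_nonzero.
Qed.

Lemma Csum_lt_window (g : nat -> Cplx) j M : (2 * j < M)%nat ->
  (forall k, (k < j)%nat -> g k = C0) -> (forall k, (2 * j < k)%nat -> g k = C0) ->
  Csum_lt (fun m => g (j + m)%nat) (S j) = Csum_lt g M.
Proof.
  intros HM Hlo Hhi. replace M with (j + (S j + (M - S (2 * j))))%nat by lia.
  rewrite Csum_lt_split, (Csum_lt_zero g j Hlo).
  rewrite (Csum_lt_zero_tail (fun i => g (j + i)%nat)) by (intros; apply Hhi; lia).
  field.
Qed.

Lemma kernel_beyond_n q n B D k j : 0 < q < 1 -> (n < j)%nat -> kernel q n B D k j = 0.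
Proof.
  intros Hq Hj. unfold kernel. destruct (andb _ _); [|reflexivity].
  unfold rhs_coef. rewrite (qpochR_zero (/ q ^ (2 * n)) (q ^ 2) j n); auto.
  - unfold Rdiv. ring.
  - rewrite <- pow_mult. field. apply pow_nonzero; lra.
Qed.

Lemma sum_kernel_to_n q n N B D k : 0 < q < 1 -> B = D * q ^ (2 * n) / q ->
  (forall i, (i < N)%nat -> D * (q ^ 2) ^ i <> 1) -> (k <= N)%nat ->
  sumR (kernel q n B D k) (S n) = lhs_coef q n B D k.
Proof.
  intros Hq HB HD Hk. rewrite <- sum_kernel by (auto; intros; apply HD; lia).
  apply sumR_eq_of_tails; intros j Hj.
  - apply kernel_beyond_n; auto; lia.
  - apply kernel_out; lia.
Qed.

Lemma phi43_partial_sums_eq q N n c d : 0 < q < 1 -> (n <= N)%nat ->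
  qpoch_nonvanishing (Copp (Cmul c d)) q ->
  ((2 * n <= N)%nat \/ exists k0, (k0 <= N)%nat /\ c = RtoC (/ q ^ k0)) ->
  Csum_lt (term43 (RtoC (/ q ^ (2 * n))) (RtoC (/ q ^ (2 * (N - n) + 1))) c d
                  (RtoC (/ q ^ N)) (RtoC (- / q ^ N)) (Copp (Cmul c d)) q) (S (2 * n)) =
  Csum_lt (term43 (RtoC (/ q ^ (2 * n))) (RtoC (/ q ^ (2 * (N - n) + 1))) (Cmul c c) (Cmul d d)
                  (RtoC (/ q ^ (2 * N))) (Copp (Cmul c d)) (Cmul (Copp (Cmul c d)) (RtoC q)) (q ^ 2))
          (S n).
Proof.
  intros Hq HnN Hs Hcase.
  set (B := / q ^ (2 * (N - n) + 1)). set (D := / q ^ (2 * N)).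
  assert (HB : B = D * q ^ (2 * n) / q).
  { unfold B, D. replace (2 * N)%nat with (2 * n + 2 * (N - n))%nat by lia.
    rewrite !pow_add. simpl pow. field. repeat split; try apply pow_nonzero; lra. }
  assert (HD : forall i, (i < N)%nat -> D * (q ^ 2) ^ i <> 1).
  { intros i Hi E. unfold D in E. rewrite <- pow_mult in E.
    assert (E' : q ^ (2 * i) = q ^ (2 * N)).
    { rewrite <- (Rmult_1_l (q ^ (2 * N))), <- E. field. apply pow_nonzero; lra. }
    apply pow_inj_lt1 in E'; auto; lia. }
  symmetry.
  rewrite (Csum_lt_ext _ (fun j =>
    Csum_lt (fun k => Cmul (RtoC (kernel q n B D k j)) (hterm c d q k)) (S (2 * n)))).
  2:{ intros j Hj. rewrite rhs_term_expand by (auto; apply qpochR_neq0; intros; apply HD; lia).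
      apply (Csum_lt_window (fun k => Cmul (RtoC (kernel q n B D k j)) (hterm c d q k))); [lia| |];
      intros; rewrite kernel_out by lia; change (RtoC 0) with C0; field. }
  rewrite Csum_lt_swap. apply Csum_lt_ext. intros k Hk.
  rewrite <- Csum_lt_mulr, Csum_lt_RtoC.
  destruct (le_lt_dec k N) as [HkN|HkN].
  - rewrite lhs_term_factor, (sum_kernel_to_n q n N)
      by (auto; apply qpochR_neq0; intros; apply HD; lia).
    reflexivity.
  - destruct Hcase as [Hc|[k0 [Hk0 Hc]]]; [lia|].
    assert (Z : qpoch c q k = C0) by (apply (qpoch_zero c q k k0); auto; lra || lia).
    unfold term43, hterm, qpoch2, Cdiv. rewrite Z. ring.
Qed.

Lemma ex_least_nat (P : nat -> Prop) M : P M -> exists K, P K /\ forall j, (j < K)%nat -> ~ P j.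
Proof.
  induction M as [M IH] using (well_founded_induction lt_wf). intros HM.
  destruct (classic (exists j, (j < M)%nat /\ P j)) as [[j [Hj Pj]]|Hn].
  - exact (IH j Hj Pj).
  - exists M. split; auto. intros j Hj Pj. apply Hn. eauto.
Qed.

(* Summing past the termination index only adds zero terms. *)
Lemma phi43_truncate a1 a2 a3 a4 b1 b2 b3 p M : p <> 0 -> a1 = RtoC (/ p ^ M) ->
  phi43 a1 a2 a3 a4 b1 b2 b3 p = Csum_lt (term43 a1 a2 a3 a4 b1 b2 b3 p) (S M).
Proof.
  intros Hp Ha. unfold phi43. fold (term43 a1 a2 a3 a4 b1 b2 b3 p).
  rewrite Csum_Csum_lt. unfold term_index.
  set (least := fun K => terminates_at a1 a2 a3 a4 p K /\
                         (forall j, (j < K)%nat -> ~ terminates_at a1 a2 a3 a4 p j)).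
  assert (Hex : exists K, least K) by (apply (ex_least_nat _ M); left; auto).
  destruct (epsilon_spec (inhabits 0%nat) least Hex) as [HK Hmin].
  set (K := epsilon (inhabits 0%nat) least) in *.
  assert (HKM : (K <= M)%nat)
    by (destruct (le_lt_dec K M); auto; exfalso; apply (Hmin M); auto; left; auto).
  replace (S M) with (S K + (M - K))%nat by lia.
  symmetry. apply Csum_lt_zero_tail. intros i Hi. unfold term43, Cdiv.
  destruct HK as [H|[H|[H|H]]];
    [rewrite (qpoch_zero a1 p i K) | rewrite (qpoch_zero a2 p i K)
    | rewrite (qpoch_zero a3 p i K) | rewrite (qpoch_zero a4 p i K)]; auto; try lia; ring.
Qed.

Lemma Cexp_add z w : Cexp (Cadd z w) = Cmul (Cexp z) (Cexp w).
Proof.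
  destruct z as [a b], w as [c e]. unfold Cexp, Cadd, Cmul; simpl.
  rewrite exp_plus, cos_plus, sin_plus. apply Cpair_eq; ring.
Qed.

Lemma Cqpow_add q z w : Cqpow q (Cadd z w) = Cmul (Cqpow q z) (Cqpow q w).
Proof. unfold Cqpow. rewrite <- Cexp_add. f_equal. field. Qed.

Lemma Cqpow_RtoC q r : Cqpow q (RtoC r) = RtoC (exp (r * ln q)).
Proof.
  unfold Cqpow, Cexp, Cmul, RtoC; simpl.
  rewrite Rmult_0_l, Rmult_0_r, Rmult_0_l, Rminus_0_r, Rplus_0_r, cos_0, sin_0.
  apply Cpair_eq; ring.
Qed.

Lemma Cqpow_opp_nat q k : 0 < q -> Cqpow q (Copp (RtoC (INR k))) = RtoC (/ q ^ k).
Proof.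
  intros Hq. rewrite <- RtoC_opp, Cqpow_RtoC. f_equal.
  rewrite Ropp_mult_distr_l_reverse, exp_Ropp, <- (Rpower_pow k q Hq). reflexivity.
Qed.

Lemma Cqpow_1 q : 0 < q -> Cqpow q C1 = RtoC q.
Proof. intros Hq. unfold C1. rewrite Cqpow_RtoC, Rmult_1_l, exp_ln; auto. Qed.

Lemma LHS9_eq_RHS9 q N n gamma x : 0 < q < 1 -> (n <= N)%nat ->
  (forall j : nat, Cmul gamma (RtoC q) <> RtoC (/ q ^ j)) ->
  ((2 * n <= N)%nat \/ exists k0, (k0 <= N)%nat /\ Cqpow q (Copp x) = RtoC (/ q ^ k0)) ->
  LHS9 q N n gamma x = RHS9 q N n gamma x.
Proof.
  intros Hq HnN Hg Hcase.
  set (c := Cqpow q (Copp x)) in *. set (e := Cqpow q (Cadd x C1)).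
  set (d := Copp (Cmul gamma e)).
  assert (Hce : Cmul c e = RtoC q).
  { unfold c, e. rewrite <- Cqpow_add, <- Cqpow_1 by lra. f_equal.
    destruct x; cbv [Cadd Copp C1 RtoC fst snd]; apply Cpair_eq; ring. }
  assert (Hs : Cmul gamma (RtoC q) = Copp (Cmul c d)) by (unfold d; rewrite <- Hce; field).
  assert (Hcc : Cqpow q (Cmul (RtoC (-2)) x) = Cmul c c).
  { unfold c. rewrite <- Cqpow_add. f_equal.
    destruct x; cbv [Cadd Copp Cmul RtoC fst snd]; apply Cpair_eq; ring. }
  assert (Hdd : Cmul (Cmul gamma gamma) (Cqpow q (Cadd (Cmul (RtoC 2) x) (RtoC 2))) = Cmul d d).
  { unfold d, e. replace (Cadd (Cmul (RtoC 2) x) (RtoC 2)) with (Cadd (Cadd x C1) (Cadd x C1)).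
    - rewrite Cqpow_add. field.
    - destruct x; cbv [Cadd Copp Cmul RtoC C1 fst snd]; apply Cpair_eq; ring. }
  assert (Hs2 : Cmul gamma (RtoC (q ^ 2)) = Cmul (Copp (Cmul c d)) (RtoC q))
    by (rewrite <- Hs; simpl pow; rewrite Rmult_1_r, RtoC_mul; field).
  unfold LHS9, RHS9. fold e d.
  rewrite (phi43_truncate _ _ _ _ _ _ _ q (2 * n)), (phi43_truncate _ _ _ _ _ _ _ (q ^ 2) n)
    by (try rewrite <- pow_mult; auto; try apply pow_nonzero; lra).
  rewrite Hs, Hcc, Hdd, Hs2.
  replace (2 * N + 1 - 2 * n)%nat with (2 * (N - n) + 1)%nat by lia.
  apply phi43_partial_sums_eq; auto.
  rewrite <- Hs. apply qpoch_nonvanishing_intro; auto; lra.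
Qed.

Theorem mainTheorem9 (q : R) (N n : nat) (gamma : Cplx) :
  0 < q < 1 ->
  (0 < N)%nat ->
  (n <= N)%nat ->
  (forall j : nat, Cmul gamma (RtoC q) <> RtoC (/ q ^ j)) ->
  (forall j : nat, Cmul gamma (RtoC (q ^ 2)) <> RtoC (/ q ^ j)) ->
  ((2 * n <= N)%nat -> forall x : Cplx, LHS9 q N n gamma x = RHS9 q N n gamma x) /\
  ((N < 2 * n)%nat -> forall k : nat, (k <= N)%nat ->
      LHS9 q N n gamma (RtoC (INR k)) = RHS9 q N n gamma (RtoC (INR k))).
Proof.
  intros Hq _ HnN Hg _. split.
  - intros H x. apply LHS9_eq_RHS9; auto.
  - intros H k Hk. apply LHS9_eq_RHS9; auto. right. exists k. split; auto.
    apply Cqpow_opp_nat. lra.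
Qed.
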